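(* Let $S$ be a semigroup with finite $\mathcal{R}$-height, let $a\in S$, and let $A=aS^1$. Let $I$ be a set with $|I|\geq 2$, fix $1\in I$, let $T=\mathcal{B}(S,I)$ be the Brandt extension of $S$ by $I$, and let $B=(1,a,1)T^1$. Then $\mathrm{H}_{\mathcal{R}}(T)=\mathrm{H}_{\mathcal{R}}(S)+1$ and $\mathrm{H}_{\mathcal{R}}(B)=\mathrm{H}_{\mathcal{R}}(A)+2$.
   Context: The Brandt extension $\mathcal{B}(S,I)$ of a semigroup $S$ by a non-empty set $I$ is the set $(I\times S\times I)\cup\{0\}$ with multiplication $(i,s,j)(k,t,l)=(i,st,l)$ if $j=k$ and $=0$ otherwise, and $0x=x0=0$ for all $x$. $S^1$ denotes $S$ with an identity adjoined if necessary. Green's preorder: $u\leq_{\mathcal{R}} v$ iff $uS^1\subseteq vS^1$; $\mathcal{R}$ is the associated equivalence; the $\mathcal{R}$-height $\mathrm{H}_{\mathcal{R}}$ of a semigroup is the supremum of cardinalities of chains in its poset of $\mathcal{R}$-classes. For the right ideals $A$ and $B$, the $\mathcal{R}$-height is computed in $A$ and $B$ as semigroups in their own right. *)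

(* Semigroups are given by a carrier type with an associative
   binary operation; subsemigroups (right ideals) by a predicate closed under
   the operation. *)
From Stdlib Require Import List Arith ClassicalEpsilon.
Import ListNotations.

Definition associative_op {X : Type} (op : X -> X -> X) : Prop :=
  forall x y z, op x (op y z) = op (op x y) z.

(* Green's R-preorder computed inside the semigroup with carrier P:
   u <=_R v  iff  u P^1 is contained in v P^1, i.e. u = v or u = v w, w in P. *)
Definition Rle {X : Type} (P : X -> Prop) (op : X -> X -> X) (u v : X) : Prop :=
  u = v \/ exists w, P w /\ u = op v w.

Definition Req {X : Type} (P : X -> Prop) (op : X -> X -> X) (u v : X) : Prop :=
  Rle P op u v /\ Rle P op v u.

(* A (finite) chain of R-classes, represented by a duplicate-free list of
   representatives: pairwise R-comparable, lying in pairwise distinct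
   R-classes.  Its cardinality is the length of the list. *)
Definition is_Rchain {X : Type} (P : X -> Prop) (op : X -> X -> X) (s : list X)
  : Prop :=
  NoDup s /\
  (forall x, In x s -> P x) /\
  (forall x y, In x s -> In y s ->
     (Rle P op x y \/ Rle P op y x) /\ (Req P op x y -> x = y)).

Definition RHeight {X : Type} (P : X -> Prop) (op : X -> X -> X) (n : nat) : Prop :=
  (exists s, is_Rchain P op s /\ length s = n) /\
  (forall s, is_Rchain P op s -> length s <= n).

(* Brandt extension B(S,I): None is the zero, Some (i,s,j) is the triple (i,s,j). *)
Definition brandt_mul {S I : Type} (mul : S -> S -> S)
  (x y : option (I * S * I)) : option (I * S * I) :=
  match x, y with
  | Some (i, s, j), Some (k, t, l) =>
      if excluded_middle_informative (j = k) then Some (i, mul s t, l) else None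
  | _, _ => None
  end.

Definition principal_right_ideal {X : Type} (op : X -> X -> X) (x : X) : X -> Prop :=
  fun y => y = x \/ exists t, y = op x t.

From Stdlib Require Import List Lia ClassicalEpsilon.
Import ListNotations.

(* Chains of R-classes are transported along the diagonal embedding
   u |-> (i, u, i) of S into T = B(S, I), and back by taking middle entries:
   two comparable non-zero elements of T are R-equivalent as soon as their
   middle entries are.  So a chain of T is a chain of S plus possibly 0.
   In B = (1, a, 1) T^1 = {0} u {(1, u, l) | u in A, and u in aS if l <> 1},
   the elements (1, u, l) with l <> 1 are R-incomparable with each other, so
   a chain of B is a chain of the diagonal copy of A plus at most 0 and one
   such element; conversely both can be put below a chain of A: if m is its
   least member, then (1, m a a, 2) lies strictly between 0 and (1, m, 1). *)

Lemma Rle_refl {X} (P : X -> Prop) op x : Rle P op x x.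
Proof. now left. Qed.

Lemma Req_sym {X} (P : X -> Prop) op x y : Req P op x y -> Req P op y x.
Proof. now intros [H1 H2]. Qed.

Section Chains.

Context {X : Type} (P : X -> Prop) (op : X -> X -> X).

Lemma Rle_trans :
  associative_op op -> (forall x y, P x -> P y -> P (op x y)) ->
  forall x y z, Rle P op x y -> Rle P op y z -> Rle P op x z.
Proof.
  intros Hassoc Hclosed x y z [->|[w1 [Pw1 ->]]] [->|[w2 [Pw2 ->]]].
  - apply Rle_refl.
  - right; now exists w2.
  - right; now exists w1.
  - right; exists (op w2 w1); split; auto.
Qed.

Lemma Rchain_incl s s' : is_Rchain P op s -> NoDup s' -> incl s' s -> is_Rchain P op s'.
Proof.
  intros [_ [HP Hc]] Hnd Hincl. repeat split; auto; intros; apply Hc; auto.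
Qed.

Lemma Rchain_cons_bottom z s :
  is_Rchain P op s -> P z -> (forall y, In y s -> Rle P op z y /\ ~ Rle P op y z) ->
  is_Rchain P op (z :: s).
Proof.
  intros [Hnd [HP Hc]] Pz Hbot. split; [|split].
  - constructor; auto. intros Hz. apply (Hbot z Hz), Rle_refl.
  - intros x [<-|Hx]; auto.
  - intros x y [<-|Hx] [<-|Hy].
    + split; auto using Rle_refl.
    + destruct (Hbot y Hy) as [Hzy Hyz]. split; auto. now intros [_ ?].
    + destruct (Hbot x Hx) as [Hzx Hxz]. split; auto. now intros [? _].
    + auto.
Qed.

Lemma Rchain_has_least :
  (forall x y z, Rle P op x y -> Rle P op y z -> Rle P op x z) ->
  forall s, is_Rchain P op s -> s <> [] -> exists m, In m s /\ forall y, In y s -> Rle P op m y.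
Proof.
  intros Htrans. induction s as [|x s IH]; intros Hs Hne; [easy|].
  destruct s as [|x' s'].
  - exists x. split; [now left|]. intros y [<-|[]]. apply Rle_refl.
  - destruct IH as [m [Hm Hleast]]; [|easy|].
    { apply (Rchain_incl _ _ Hs); [apply (NoDup_cons_iff x), Hs|]. intros y Hy; now right. }
    destruct Hs as [_ [_ Hc]]. destruct (proj1 (Hc x m (or_introl eq_refl) (or_intror Hm))) as [Hxm|Hmx].
    + exists x. split; [now left|]. intros y [<-|Hy]; [apply Rle_refl|eauto].
    + exists m. split; [now right|]. intros y [<-|Hy]; auto.
Qed.

Lemma Rchain_map {Y} (Q : Y -> Prop) (opY : Y -> Y -> Y) (h : X -> Y) s :
  is_Rchain P op s ->
  (forall x, In x s -> Q (h x)) ->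
  (forall x y, In x s -> In y s -> Rle P op x y -> Rle Q opY (h x) (h y)) ->
  (forall x y, In x s -> In y s -> Rle P op x y -> Req Q opY (h x) (h y) -> Req P op x y) ->
  is_Rchain Q opY (map h s).
Proof.
  intros [Hnd [HP Hc]] HQ Hmono Hrefl.
  assert (Hinj : forall x y, In x s -> In y s -> Req Q opY (h x) (h y) -> x = y).
  { intros x y Hx Hy Hxy. apply (Hc x y Hx Hy).
    destruct (proj1 (Hc x y Hx Hy)) as [C|C].
    - now apply Hrefl.
    - apply Req_sym, Hrefl; auto. split; apply Hxy. }
  split; [|split].
  - apply NoDup_map_NoDup_ForallPairs; auto.
    intros x y Hx Hy E. apply Hinj; auto. rewrite E. split; apply Rle_refl.
  - intros z Hz. apply in_map_iff in Hz as [x [<- Hx]]. auto.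
  - intros z1 z2 Hz1 Hz2.
    apply in_map_iff in Hz1 as [x [<- Hx]]. apply in_map_iff in Hz2 as [y [<- Hy]].
    split.
    + destruct (proj1 (Hc x y Hx Hy)); auto.
    + intros E. now rewrite (Hinj x y Hx Hy E).
Qed.

Lemma RHeight_shift {Y} (Q : Y -> Prop) (opY : Y -> Y -> Y) c :
  (forall t, is_Rchain P op t -> exists s, is_Rchain Q opY s /\ length s = length t + c) ->
  (forall s, is_Rchain Q opY s -> exists t, is_Rchain P op t /\ length s <= length t + c) ->
  forall k, RHeight Q opY k <-> exists n, k = n + c /\ RHeight P op n.
Proof.
  intros Hup Hdown k; split.
  - intros [[s [Hs <-]] Hmax].
    destruct (Hdown s Hs) as [t [Ht Hst]].
    destruct (Hup t Ht) as [s' [Hs' Hs't]].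
    pose proof (Hmax s' Hs').
    exists (length t). split; [lia|]. split; [now exists t|].
    intros t' Ht'. destruct (Hup t' Ht') as [s'' [Hs'' Hl]].
    specialize (Hmax s'' Hs''). lia.
  - intros [n [-> [[t [Ht <-]] Hmax]]]. split.
    + destruct (Hup t Ht) as [s [Hs Hl]]. now exists s.
    + intros s Hs. destruct (Hdown s Hs) as [t' [Ht' Hl]].
      specialize (Hmax t' Ht'). lia.
Qed.

End Chains.

Lemma principal_right_ideal_mul_closed {X} (op : X -> X -> X) x :
  associative_op op ->
  forall y z, principal_right_ideal op x y -> principal_right_ideal op x (op y z).
Proof.
  intros Hassoc y z [->|[t ->]]; right; [now exists z|].
  exists (op t z). now rewrite Hassoc.
Qed.

Lemma Rle_principal_right_ideal_trans {X} (op : X -> X -> X) x :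
  associative_op op -> forall u v w,
  Rle (principal_right_ideal op x) op u v -> Rle (principal_right_ideal op x) op v w ->
  Rle (principal_right_ideal op x) op u w.
Proof.
  intros Hassoc. apply Rle_trans; [exact Hassoc|].
  intros y z Hy _. now apply principal_right_ideal_mul_closed.
Qed.

Section Brandt.

Context {S I : Type} (mul : S -> S -> S).

Local Notation T := (option (I * S * I)).
Local Notation bmul := (@brandt_mul S I mul).

Lemma brandt_mul_match i j l u v :
  bmul (Some (i, u, j)) (Some (j, v, l)) = Some (i, mul u v, l).
Proof. unfold brandt_mul. now destruct excluded_middle_informative. Qed.

Lemma brandt_mul_mismatch i j k l u v :
  j <> k -> bmul (Some (i, u, j)) (Some (k, v, l)) = None.
Proof. intros Hjk. unfold brandt_mul. now destruct excluded_middle_informative. Qed.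

Lemma brandt_mul_0_r x : bmul x None = None.
Proof. now destruct x as [[[i u] j]|]. Qed.

Lemma brandt_mul_assoc : associative_op mul -> associative_op bmul.
Proof.
  intros Hassoc [[[i u] j]|] [[[k v] l]|] [[[m w] n]|]; try reflexivity;
    try (now rewrite !brandt_mul_0_r).
  destruct (excluded_middle_informative (j = k)) as [<-|Hjk];
  destruct (excluded_middle_informative (l = m)) as [<-|Hlm].
  - now rewrite !brandt_mul_match, Hassoc.
  - now rewrite brandt_mul_match, !brandt_mul_mismatch.
  - now rewrite brandt_mul_match, !brandt_mul_mismatch.
  - now rewrite !brandt_mul_mismatch.
Qed.

Lemma brandt_mul_Some_inv x y i u l : bmul x y = Some (i, u, l) ->
  exists j v w, x = Some (i, v, j) /\ y = Some (j, w, l) /\ u = mul v w.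
Proof.
  destruct x as [[[i' v] j]|], y as [[[k w] l']|]; try discriminate.
  unfold brandt_mul. destruct excluded_middle_informative as [<-|]; [|discriminate].
  intros E. injection E as <- <- <-. now exists j, v, w.
Qed.

Section Rorder.

Variables (P : T -> Prop) (Q : S -> Prop).

Lemma Rle_brandt_inv i u j k v l :
  Rle P bmul (Some (i, u, j)) (Some (k, v, l)) ->
  (i, u, j) = (k, v, l) \/ i = k /\ exists w, P (Some (l, w, j)) /\ u = mul v w.
Proof.
  intros [E|[x [Px E]]]; [left; congruence|right].
  symmetry in E. apply brandt_mul_Some_inv in E as (l' & v' & w & E1 & -> & ->).
  injection E1 as -> -> ->. split; [reflexivity|]. now exists w.
Qed.

Lemma Rle_brandt_entry :
  (forall l w j, P (Some (l, w, j)) -> Q w) ->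
  forall i u j k v l, Rle P bmul (Some (i, u, j)) (Some (k, v, l)) -> Rle Q mul u v.
Proof.
  intros HPQ i u j k v l H.
  apply Rle_brandt_inv in H as [E|[_ [w [Pw ->]]]].
  - injection E as _ -> _. apply Rle_refl.
  - right. exists w. split; eauto.
Qed.

Lemma Rle_brandt_diag i :
  (forall w, Q w -> P (Some (i, w, i))) ->
  forall u v, Rle Q mul u v -> Rle P bmul (Some (i, u, i)) (Some (i, v, i)).
Proof.
  intros HQP u v [->|[w [Qw ->]]]; [apply Rle_refl|].
  right. exists (Some (i, w, i)). split; auto. now rewrite brandt_mul_match.
Qed.

Lemma Rle_brandt_zero : P None -> forall x, Rle P bmul None x.
Proof. intros P0 x. right. exists None. split; auto. now rewrite brandt_mul_0_r. Qed.

Lemma not_Rle_brandt_nonzero_zero x : ~ Rle P bmul (Some x) None.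
Proof. now intros [E|[w [_ E]]]. Qed.

Lemma Rchain_brandt_diag i :
  (forall w, Q w -> P (Some (i, w, i))) ->
  (forall l w j, P (Some (l, w, j)) -> Q w) ->
  forall t, is_Rchain Q mul t -> is_Rchain P bmul (map (fun u => Some (i, u, i)) t).
Proof.
  intros HQP HPQ t Ht. apply (Rchain_map _ _ _ _ _ _ Ht).
  - intros u Hu. apply HQP, Ht, Hu.
  - intros u v _ _. now apply Rle_brandt_diag.
  - intros u v _ _ _ [H1 H2]. split; eapply Rle_brandt_entry; eauto.
Qed.

End Rorder.

Local Notation Tfull := (fun _ : T => True).
Local Notation Sfull := (fun _ : S => True).

Definition brandt_nonzero (x : T) : bool :=
  match x with Some _ => true | None => false end.

(* [d] is a filler for the zero, which is always filtered out first. *)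
Definition brandt_entry (d : S) (x : T) : S :=
  match x with Some (_, u, _) => u | None => d end.

Lemma Req_brandt_of_Req_entry i u j k v l :
  Rle Tfull bmul (Some (i, u, j)) (Some (k, v, l)) -> Req Sfull mul u v ->
  Req Tfull bmul (Some (i, u, j)) (Some (k, v, l)).
Proof.
  intros Hle [_ Hvu]. split; [exact Hle|].
  apply Rle_brandt_inv in Hle as [E|[-> [w [_ Hw]]]]; [rewrite E; apply Rle_refl|].
  right. destruct Hvu as [->|[w' [_ ->]]].
  - exists (Some (j, w, l)). split; [exact Logic.I|]. now rewrite brandt_mul_match, <- Hw.
  - exists (Some (j, w', l)). split; [exact Logic.I|]. now rewrite brandt_mul_match.
Qed.

Lemma brandt_chain_of_chain (i : I) t : is_Rchain Sfull mul t ->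
  exists s, is_Rchain Tfull bmul s /\ length s = length t + 1.
Proof.
  intros Ht. exists (None :: map (fun u => Some (i, u, i)) t).
  split; [|simpl; rewrite length_map; lia].
  apply Rchain_cons_bottom; [now apply Rchain_brandt_diag with (Q := Sfull)|exact Logic.I|].
  intros y Hy. apply in_map_iff in Hy as [u [<- _]].
  split; [now apply Rle_brandt_zero|apply not_Rle_brandt_nonzero_zero].
Qed.

Lemma chain_of_brandt_chain (d : S) s : is_Rchain Tfull bmul s ->
  exists t, is_Rchain Sfull mul t /\ length s <= length t + 1.
Proof.
  intros Hs. exists (map (brandt_entry d) (filter brandt_nonzero s)). split.
  - assert (Hnz : forall x, In x (filter brandt_nonzero s) -> exists i u j, x = Some (i, u, j)).
    { intros [[[i u] j]|] Hx; [now exists i, u, j|now apply filter_In in Hx as [_ ?]]. }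
    apply Rchain_map with (P := Tfull) (op := bmul); auto.
    + apply (Rchain_incl _ _ _ _ Hs); [apply NoDup_filter, Hs|apply incl_filter].
    + intros x y Hx Hy.
      destruct (Hnz x Hx) as (i & u & j & ->), (Hnz y Hy) as (k & v & l & ->).
      apply Rle_brandt_entry; auto.
    + intros x y Hx Hy.
      destruct (Hnz x Hx) as (i & u & j & ->), (Hnz y Hy) as (k & v & l & ->).
      apply Req_brandt_of_Req_entry.
  - rewrite length_map, <- (filter_length brandt_nonzero s).
    enough (length (filter (fun x => negb (brandt_nonzero x)) s) <= length [@None (I * S * I)])
      by (simpl in *; lia).
    apply NoDup_incl_length; [apply NoDup_filter, Hs|].
    intros [x|] Hx; [now apply filter_In in Hx as [_ ?]|now left].
Qed.

Section PrincipalRightIdeal.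

Hypothesis Hassoc : associative_op mul.
Variables (a : S) (i1 : I).

Local Notation A := (principal_right_ideal mul a).
Local Notation B := (principal_right_ideal bmul (Some (i1, a, i1))).

Lemma in_B_inv y : B y -> y = None \/ exists u l, y = Some (i1, u, l) /\ A u.
Proof.
  intros [->|[z E]]; [right; exists a, i1; split; [reflexivity|now left]|].
  destruct y as [[[i u] l]|]; [right|now left].
  symmetry in E. apply brandt_mul_Some_inv in E as (j & v & w & E & -> & ->).
  injection E as <- <- <-. exists (mul a w), l. split; [reflexivity|]. right; now exists w.
Qed.

Lemma in_B_zero : B None.
Proof. right. now exists None. Qed.

Lemma in_B_entry l w j : B (Some (l, w, j)) -> A w.
Proof. intros HB. apply in_B_inv in HB as [|(u & l' & E & Au)]; [discriminate|congruence]. Qed.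

Lemma in_B_diag u : A u -> B (Some (i1, u, i1)).
Proof.
  intros [->|[x ->]]; [now left|right].
  exists (Some (i1, x, i1)). now rewrite brandt_mul_match.
Qed.

Lemma in_B_mul_a u l : A u -> B (Some (i1, mul u a, l)).
Proof.
  intros [->|[x ->]]; right.
  - exists (Some (i1, a, l)). now rewrite brandt_mul_match.
  - exists (Some (i1, mul x a, l)). now rewrite brandt_mul_match, Hassoc.
Qed.

Lemma Rle_B_offcolumn x k v l : l <> i1 ->
  Rle B bmul x (Some (k, v, l)) -> x = Some (k, v, l) \/ x = None.
Proof.
  intros Hl [->|[w [Bw ->]]]; [now left|right].
  apply in_B_inv in Bw as [->|(u & l' & -> & _)]; [apply brandt_mul_0_r|].
  now apply brandt_mul_mismatch.
Qed.

Lemma B_chain_of_A_chain i2 : i2 <> i1 -> forall t, is_Rchain A mul t ->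
  exists s, is_Rchain B bmul s /\ length s = length t + 2.
Proof.
  intros Hi2 t Ht.
  assert (Hbound : exists m, A m /\ forall u, In u t -> Rle A mul m u).
  { destruct t as [|u t']; [exists a; split; [now left|easy]|].
    destruct (Rchain_has_least A mul (Rle_principal_right_ideal_trans mul a Hassoc) (u :: t'))
      as [m [Hm Hleast]]; [exact Ht|easy|].
    exists m. split; [now apply Ht|exact Hleast]. }
  destruct Hbound as [m [Am Hleast]].
  (* (i1, a a, i2) is in B since a a is in aS; (i1, a, i2) need not be. *)
  set (z := Some (i1, mul m (mul a a), i2)).
  assert (Bz : B z).
  { unfold z. rewrite Hassoc. apply in_B_mul_a, principal_right_ideal_mul_closed; assumption. }
  assert (Hdiag : is_Rchain B bmul (map (fun u => Some (i1, u, i1)) t)).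
  { apply Rchain_brandt_diag with (Q := A); [exact in_B_diag|exact in_B_entry|exact Ht]. }
  exists (None :: z :: map (fun u => Some (i1, u, i1)) t).
  split; [|simpl; rewrite length_map; lia].
  apply Rchain_cons_bottom; [apply Rchain_cons_bottom; [exact Hdiag|exact Bz|]|exact in_B_zero|].
  - intros y Hy. apply in_map_iff in Hy as [u [<- Hu]]. split.
    + apply Rle_principal_right_ideal_trans with (Some (i1, m, i1)); [now apply brandt_mul_assoc| |].
      * right. exists (Some (i1, mul a a, i2)). split; [|now rewrite brandt_mul_match].
        apply in_B_mul_a. now left.
      * apply Rle_brandt_diag with (Q := A); [exact in_B_diag|exact (Hleast u Hu)].
    + intros Hle. apply Rle_B_offcolumn in Hle as [E|E]; [|discriminate|exact Hi2].
      injection E as _ E. exact (Hi2 (eq_sym E)).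
  - intros y Hy. split; [exact (Rle_brandt_zero _ in_B_zero y)|].
    destruct Hy as [<-|Hy]; [|apply in_map_iff in Hy as [u [<- _]]]; apply not_Rle_brandt_nonzero_zero.
Qed.

Definition in_column (i : I) (x : T) : bool :=
  match x with
  | Some (_, _, l) => if excluded_middle_informative (l = i) then true else false
  | None => false
  end.

Lemma in_B_column_inv x : B x -> in_column i1 x = true -> exists u, x = Some (i1, u, i1) /\ A u.
Proof.
  intros Bx Hcol. apply in_B_inv in Bx as [->|(u & l & -> & Au)]; [discriminate|].
  simpl in Hcol. destruct excluded_middle_informative as [->|]; [now exists u|discriminate].
Qed.

Lemma B_chain_offcolumn_length s : is_Rchain B bmul s ->
  length (filter (fun x => negb (in_column i1 x)) s) <= 2.
Proof.
  intros [Hnd [HB Hc]].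
  set (r := filter (fun x => negb (in_column i1 x)) s).
  assert (Hr : forall x, In x r -> x = None \/ exists u l, x = Some (i1, u, l) /\ l <> i1).
  { intros x Hx. apply filter_In in Hx as [Hx Hcol].
    apply HB, in_B_inv in Hx as [->|(u & l & -> & _)]; [now left|right].
    exists u, l. simpl in Hcol. now destruct excluded_middle_informative. }
  destruct (classic (exists x, In (Some x) r)) as [[x0 Hx0]|Hnone].
  - change 2 with (length [None; Some x0]).
    apply NoDup_incl_length; [apply NoDup_filter, Hnd|].
    intros y Hy. destruct (Hr y Hy) as [->|(u & l & -> & Hl)]; [now left|right; left].
    destruct (Hr _ Hx0) as [|(u0 & l0 & E0 & Hl0)]; [discriminate|]. rewrite E0 in *.
    apply filter_In in Hy as [Hy _]. apply filter_In in Hx0 as [Hx0 _].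
    destruct (proj1 (Hc _ _ Hx0 Hy)) as [H|H];
      apply Rle_B_offcolumn in H as [E|E]; congruence.
  - enough (length r <= length [@None (I * S * I)]) by (simpl in *; lia).
    apply NoDup_incl_length; [apply NoDup_filter, Hnd|].
    intros [y|] Hy; [exfalso; apply Hnone; now exists y|now left].
Qed.

Lemma A_chain_of_B_chain s : is_Rchain B bmul s ->
  exists t, is_Rchain A mul t /\ length s <= length t + 2.
Proof.
  intros Hs. exists (map (brandt_entry a) (filter (in_column i1) s)). split.
  - assert (Hcol : forall x, In x (filter (in_column i1) s) ->
                     exists u, x = Some (i1, u, i1) /\ A u).
    { intros x Hx. apply filter_In in Hx as [Hx Hq]. apply in_B_column_inv; auto. now apply Hs. }
    apply Rchain_map with (P := B) (op := bmul).
    + apply (Rchain_incl _ _ _ _ Hs); [apply NoDup_filter, Hs|apply incl_filter].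
    + intros x Hx. now destruct (Hcol x Hx) as [u [-> Au]].
    + intros x y Hx Hy.
      destruct (Hcol x Hx) as [u [-> _]], (Hcol y Hy) as [v [-> _]].
      apply Rle_brandt_entry, in_B_entry.
    + intros x y Hx Hy _.
      destruct (Hcol x Hx) as [u [-> _]], (Hcol y Hy) as [v [-> _]].
      intros [H1 H2]. split; apply Rle_brandt_diag with (Q := A); auto using in_B_diag.
  - rewrite length_map, <- (filter_length (in_column i1) s).
    pose proof (B_chain_offcolumn_length s Hs). lia.
Qed.

End PrincipalRightIdeal.

End Brandt.

Theorem theorem4p5
  (S : Type) (mul : S -> S -> S) (Hassoc : associative_op mul)
  (Hfin : exists n, RHeight (fun _ : S => True) mul n)
  (a : S) (I : Type) (i1 : I) (HI : exists i : I, i <> i1) :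
  (forall k, RHeight (fun _ : option (I * S * I) => True) (brandt_mul mul) k <->
             exists n, k = n + 1 /\ RHeight (fun _ : S => True) mul n) /\
  (forall k, RHeight (principal_right_ideal (brandt_mul mul) (Some (i1, a, i1)))
                     (brandt_mul mul) k <->
             exists m, k = m + 2 /\ RHeight (principal_right_ideal mul a) mul m).
Proof.
  destruct HI as [i2 Hi2].
  split; apply RHeight_shift.
  - apply brandt_chain_of_chain, i1.
  - apply chain_of_brandt_chain, a.
  - exact (B_chain_of_A_chain mul Hassoc a i1 i2 Hi2).
  - exact (A_chain_of_B_chain mul a i1).
Qed.
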